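(* Let $n\ge2$. (1) For every initial vector $\mathbf p^0\in\Delta_n$ with $p^0_i>0$ for all $i$, the trajectory $\mathbf p^{t+1}=F(\mathbf p^t)$ converges to $(\frac1n,\dots,\frac1n)$. (2) The set $\partial\Delta_n=\{\mathbf p\in\Delta_n:\ p_i=0\text{ for some }i\}$ is invariant under $F$, and every fixed point of $F$ lying in $\partial\Delta_n$ is an unstable fixed point of $F$ on $\Delta_n$ (a repeller: arbitrarily small perturbations making its zero coordinates positive are not damped).
   Context: $\Delta_n=\{\mathbf p\in\mathbb R^n: p_i\ge 0,\ \sum_i p_i=1\}$. For $\mathbf p\in\Delta_n$, $L(\mathbf p)=\sum_{k}p_k^2$ and $F(\mathbf p)_i=p_i\frac{n-p_i}{n-L(\mathbf p)}$. *)

(* R : realType, vectors in R^n as row vectors 'rV[R]_n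
   (normed with the max norm provided by mathcomp-analysis). *)
From HB Require Import structures.
From mathcomp Require Import all_boot all_order all_algebra.
From mathcomp Require Import all_classical all_reals all_analysis.
Set Implicit Arguments. Unset Strict Implicit. Unset Printing Implicit Defensive.
Import Order.TTheory GRing.Theory Num.Theory.
Import numFieldNormedType.Exports.
Local Open Scope ring_scope.

Section Defs.
Variables (R : realType) (n : nat).

Definition simplex (p : 'rV[R]_n) : Prop :=
  (forall i, 0 <= p ord0 i) /\ \sum_i p ord0 i = 1.

Definition bdry_simplex (p : 'rV[R]_n) : Prop :=
  simplex p /\ exists i, p ord0 i = 0.

Definition Lsq (p : 'rV[R]_n) : R := \sum_k p ord0 k ^+ 2.

Definition Fmap (p : 'rV[R]_n) : 'rV[R]_n :=
  \row_i (p ord0 i * (n%:R - p ord0 i) / (n%:R - Lsq p)).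

Definition barycenter : 'rV[R]_n := const_mx (n%:R)^-1.

Definition lyapunov_stable_on (D : 'rV[R]_n -> Prop)
    (f : 'rV[R]_n -> 'rV[R]_n) (q : 'rV[R]_n) : Prop :=
  forall e : R, 0 < e -> exists2 d : R, 0 < d &
    forall p, D p -> `|p - q| < d -> forall t : nat, `|iter t f p - q| < e.

End Defs.

(* Every coordinate is updated by one and the same map
   x |-> x (n - x) / (n - L(p)), which is increasing on [0, 1]; since L(p) is
   the p-weighted mean of the coordinates, it lies between the smallest
   coordinate a and the largest b, so the map sends a up and b down.  Hence
   [a, b] is pushed into a subinterval whose length shrinks by the factor
   (1 - a/n) <= (1 - min p^0 / n), and all coordinates converge to the common
   value 1/n.  A zero coordinate stays zero, and any boundary point q is
   approached by the points q + s (e - q) of the open simplex, whose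
   trajectories all run off to the barycenter e, so q is not stable. *)
From HB Require Import structures.
From mathcomp Require Import all_boot all_order all_algebra.
From mathcomp Require Import all_classical all_reals all_analysis.
From mathcomp Require Import ring lra.
Import Order.TTheory GRing.Theory Num.Theory.
Import numFieldNormedType.Exports.
Local Open Scope classical_set_scope.
Local Open Scope ring_scope.

Set Implicit Arguments. Unset Strict Implicit.

Section CoordinateMap.
Variables (R : realFieldType) (N L : R).
Hypotheses (N_ge2 : 2 <= N) (L_le1 : L <= 1).

Definition Fcoord (x : R) : R := x * (N - x) / (N - L).

Let NL_gt0 : 0 < N - L. Proof. by move: N_ge2 L_le1; lra. Qed.

Lemma Fcoord_le (x y : R) : 0 <= x -> x <= y -> y <= 1 -> Fcoord x <= Fcoord y.
Proof.
move=> x0 xy y1; have N2 := N_ge2.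
rewrite /Fcoord ler_pM2r ?invr_gt0 ?NL_gt0 //.
have := mulr_ge0 (ltac:(lra) : 0 <= y - x) (ltac:(lra) : 0 <= N - x - y); nra.
Qed.

Lemma Fcoord_ge0 (x : R) : 0 <= x -> x <= 1 -> 0 <= Fcoord x.
Proof.
move=> x0 x1; have N2 := N_ge2.
by rewrite /Fcoord divr_ge0 ?(ltW NL_gt0) //; nra.
Qed.

Lemma Fcoord_ge_id (a : R) : 0 <= a -> a <= L -> a <= Fcoord a.
Proof. by move=> *; rewrite /Fcoord ler_pdivlMr ?NL_gt0 //; nra. Qed.

Lemma Fcoord_le_id (b : R) : L <= b -> 0 <= b -> Fcoord b <= b.
Proof. by move=> *; rewrite /Fcoord ler_pdivrMr ?NL_gt0 //; nra. Qed.

(* [Fcoord b - Fcoord a = (b - a) (N - a - b) / (N - L)], and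
   [N (N - a - b) <= (N - c) (N - L)] rearranges to
   [N (b - L) + N (a - c) + c L >= 0]. *)
Lemma Fcoord_contract (a b c : R) : 0 < c -> c <= a -> a <= L -> L <= b ->
  b <= 1 -> Fcoord b - Fcoord a <= (1 - c / N) * (b - a).
Proof.
move=> c0 ca aL Lb b1; have N2 := N_ge2; have NL := NL_gt0.
have N0 : 0 < N by lra.
have -> : 1 - c / N = (N - c) / N by field; lra.
rewrite /Fcoord -mulrBl ler_pdivrMr //.
have -> : (N - c) / N * (b - a) * (N - L) = (N - c) * (b - a) * (N - L) / N.
  by field; lra.
rewrite ler_pdivlMr //.
have h0 : 0 <= N * (b - L) + N * (a - c) + c * L by nra.
have := mulr_ge0 (ltac:(lra) : 0 <= b - a) h0; nra.
Qed.

End CoordinateMap.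

Section Simplex.
Variables (R : realType) (n : nat).
Hypothesis hn : (2 <= n)%N.

Let N : R := n%:R.
Let N_ge2 : 2 <= N. Proof. by rewrite /N (ler_nat R 2 n). Qed.
Let i0 : 'I_n := Ordinal (leq_trans (isT : (0 < 2)%N) hn).

Lemma simplex_coord_le1 (p : 'rV[R]_n) i : simplex p -> p ord0 i <= 1.
Proof.
case=> hp <-; rewrite (bigD1 i) //= lerDl sumr_ge0 // => j _; exact: hp.
Qed.

Lemma Lsq_le (p : 'rV[R]_n) b : simplex p -> (forall i, p ord0 i <= b) ->
  Lsq p <= b.
Proof.
case=> hp hs hb; apply: (@le_trans _ _ (\sum_i b * p ord0 i)).
  by apply: ler_sum => i _; rewrite expr2 ler_wpM2r.
by rewrite -mulr_sumr hs mulr1.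
Qed.

Lemma Lsq_ge (p : 'rV[R]_n) a : simplex p -> (forall i, a <= p ord0 i) ->
  a <= Lsq p.
Proof.
case=> hp hs ha; apply: (@le_trans _ _ (\sum_i a * p ord0 i)).
  by rewrite -mulr_sumr hs mulr1.
by apply: ler_sum => i _; rewrite expr2 ler_wpM2r.
Qed.

Lemma Lsq_simplex_le1 (p : 'rV[R]_n) : simplex p -> Lsq p <= 1.
Proof. by move=> hp; apply: Lsq_le => // i; apply: simplex_coord_le1. Qed.

Lemma FmapE (p : 'rV[R]_n) i : Fmap p ord0 i = Fcoord N (Lsq p) (p ord0 i).
Proof. by rewrite mxE. Qed.

Lemma Fmap_simplex (p : 'rV[R]_n) : simplex p -> simplex (Fmap p).
Proof.
move=> hp; have L1 := Lsq_simplex_le1 hp; have N2 := N_ge2.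
split=> [i|].
  by rewrite FmapE Fcoord_ge0 ?hp.1 ?simplex_coord_le1.
have hsum : \sum_i p ord0 i * (N - p ord0 i) = N - Lsq p.
  rewrite (eq_bigr (fun i => N * p ord0 i - p ord0 i ^+ 2)); last first.
    by move=> i _; rewrite expr2; ring.
  by rewrite sumrB -mulr_sumr hp.2 mulr1.
under eq_bigr do rewrite FmapE.
by rewrite -mulr_suml hsum divff // gt_eqF //; lra.
Qed.

Lemma iter_Fmap_simplex (p : 'rV[R]_n) t :
  simplex p -> simplex (iter t (@Fmap R n) p).
Proof. by move=> hp; elim: t => //= t ih; apply: Fmap_simplex. Qed.

Lemma Fmap_bounds (p : 'rV[R]_n) a b c : simplex p -> 0 < c -> c <= a ->
  b <= 1 -> (forall i, a <= p ord0 i <= b) ->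
  exists a' b', [/\ a <= a', b' <= b, b' - a' <= (1 - c / N) * (b - a) &
    forall i, a' <= Fmap p ord0 i <= b'].
Proof.
move=> hp c0 ca b1 hab.
have aL : a <= Lsq p by apply: Lsq_ge => // i; case/andP: (hab i).
have Lb : Lsq p <= b by apply: Lsq_le => // i; case/andP: (hab i).
have L1 := Lsq_simplex_le1 hp.
exists (Fcoord N (Lsq p) a), (Fcoord N (Lsq p) b); split.
- by apply: Fcoord_ge_id => //; lra.
- by apply: Fcoord_le_id => //; lra.
- exact: Fcoord_contract.
- move=> i; case/andP: (hab i) => hai hib.
  by rewrite FmapE !Fcoord_le ?simplex_coord_le1 //; lra.
Qed.

Lemma iter_Fmap_bounds (p0 : 'rV[R]_n) c : simplex p0 -> 0 < c ->
  (forall i, c <= p0 ord0 i) -> forall t, exists a b,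
  [/\ c <= a, b <= 1, b - a <= (1 - c / N) ^+ t &
    forall i, a <= iter t (@Fmap R n) p0 ord0 i <= b].
Proof.
move=> hp c0 hc; elim=> [|t [a [b [ca b1 hba hi]]]].
  by exists c, 1; split=> //= [|i]; rewrite ?expr0 ?hc ?simplex_coord_le1 //; lra.
have ratio_ge0 : 0 <= 1 - c / N.
  have := simplex_coord_le1 i0 hp; have := hc i0; have := N_ge2 => *.
  rewrite subr_ge0 ler_pdivrMr; nra.
have [a' [b' [aa' b'b hb' hi']]] := Fmap_bounds (iter_Fmap_simplex t hp) c0 ca b1 hi.
exists a', b'; split=> //; [exact: le_trans aa' | exact: le_trans b'b b1 |].
by apply: (le_trans hb'); rewrite exprS ler_wpM2l.
Qed.

(* 1/n is the mean of the coordinates, hence also lies in [a, b]. *)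
Lemma simplex_dist_barycenter (p : 'rV[R]_n) a b : simplex p ->
  (forall i, a <= p ord0 i <= b) -> forall i, `|p ord0 i - N^-1| <= b - a.
Proof.
case=> hp hs hab i; have N2 := N_ge2.
have sa : N * a <= 1.
  rewrite -hs; apply: (@le_trans _ _ (\sum_(j < n) a)).
    by rewrite sumr_const card_ord mulr_natl.
  by apply: ler_sum => j _; case/andP: (hab j).
have sb : 1 <= N * b.
  rewrite -hs; apply: (@le_trans _ _ (\sum_(j < n) b)).
    by apply: ler_sum => j _; case/andP: (hab j).
  by rewrite sumr_const card_ord mulr_natl.
have ha : a <= N^-1 by rewrite -(mul1r N^-1) ler_pdivlMr; lra.
have hb : N^-1 <= b by rewrite -(mul1r N^-1) ler_pdivrMr; lra.
by case/andP: (hab i) => *; rewrite ler_norml; apply/andP; split; lra.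
Qed.

Lemma iter_Fmap_cvg_barycenter (p0 : 'rV[R]_n) :
  simplex p0 -> (forall i, 0 < p0 ord0 i) ->
  (fun t : nat => iter t (@Fmap R n) p0) @ \oo --> barycenter R n.
Proof.
move=> hp hpos.
have [j _ hj] := @arg_minP _ _ _ i0 predT (fun i => p0 ord0 i) isT.
set c := p0 ord0 j in hj.
have c0 : 0 < c by apply: hpos.
have c1 : c <= 1 by apply: simplex_coord_le1.
have N2 := N_ge2.
have cN0 : 0 < c / N by rewrite divr_gt0 //; lra.
have cN1 : c / N <= 1 by rewrite ler_pdivrMr; lra.
have ratio_lt1 : `|1 - c / N| < 1 by rewrite ger0_norm; lra.
apply/cvgrPdist_le => e e0; near=> t.
have ht : `|0 - (1 - c / N) ^+ t| <= e.
  by near: t; exact: cvgr_dist_le _ _ (cvg_expr ratio_lt1) e e0.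
rewrite sub0r normrN ger0_norm ?exprn_ge0 // in ht; last lra.
have [a [b [_ _ hba hi]]] := iter_Fmap_bounds hp c0 (fun i => hj i isT) t.
rewrite /Num.Def.normr/= mx_normrE (bigmax_le _ (ltW e0))//= => ij _.
rewrite !mxE (ord1 ij.1) distrC.
apply: le_trans (simplex_dist_barycenter (iter_Fmap_simplex t hp) hi ij.2) _.
exact: le_trans hba ht.
Unshelve. all: by end_near.
Qed.

Lemma Fmap_bdry_simplex (p : 'rV[R]_n) : bdry_simplex p -> bdry_simplex (Fmap p).
Proof.
case=> hp [i hi]; split; first exact: Fmap_simplex.
by exists i; rewrite FmapE hi /Fcoord !mul0r.
Qed.

Lemma simplex_towards_barycenter (q : 'rV[R]_n) s : simplex q -> 0 < s -> s <= 1 ->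
  simplex (q + s *: (barycenter R n - q)) /\
  forall k, 0 < (q + s *: (barycenter R n - q)) ord0 k.
Proof.
move=> hq s0 s1; have N2 := N_ge2.
have pE k : (q + s *: (barycenter R n - q)) ord0 k
    = (1 - s) * q ord0 k + s * N^-1 by rewrite !mxE; ring.
have sN0 : 0 < s * N^-1 by rewrite mulr_gt0 // invr_gt0; lra.
have ppos k : 0 < (q + s *: (barycenter R n - q)) ord0 k.
  by rewrite pE; have := hq.1 k; nra.
split=> //; split=> [k|]; first exact/ltW.
under eq_bigr do rewrite pE.
rewrite big_split /= -!mulr_sumr hq.2 sumr_const card_ord -mulr_natl.
by rewrite mulfV ?gt_eqF //; [ring | lra].
Qed.

Lemma bdry_simplex_not_stable (q : 'rV[R]_n) : bdry_simplex q ->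
  ~ lyapunov_stable_on (@simplex R n) (@Fmap R n) q.
Proof.
case=> hq [i qi0] hst; have N2 := N_ge2.
set v := barycenter R n - q.
have v_gt0 : 0 < `|v|.
  rewrite normr_gt0; apply/eqP => /(congr1 (fun m : 'rV[R]_n => m ord0 i)).
  rewrite !mxE qi0 subr0 => /eqP; rewrite invr_eq0 pnatr_eq0.
  by case: n hn.
have v2_gt0 : 0 < `|v| / 2 by lra.
have [d d0 hd] := hst _ v2_gt0.
set s := Num.min 1 (d / (2 * `|v|)).
have s0 : 0 < s by rewrite lt_min ltr01 divr_gt0 //; lra.
have s1 : s <= 1 by rewrite ge_min lexx.
have s2 : s <= d / (2 * `|v|) by rewrite ge_min lexx orbT.
have [psimp ppos] := simplex_towards_barycenter hq s0 s1.
rewrite -/v in psimp ppos; set p := q + s *: v in psimp ppos.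
have pq : `|p - q| < d.
  rewrite /p [q + _]addrC addrK normrZ ger0_norm; last lra.
  have : s * `|v| <= d / 2.
    rewrite -(@ler_pM2r _ (`|v|)^-1) ?invr_gt0 // -mulrA mulfV ?gt_eqF // mulr1.
    by apply: (le_trans s2); rewrite invfM mulrA.
  lra.
have hcvg := iter_Fmap_cvg_barycenter psimp ppos.
have [t ht] := filter_ex (cvgr_dist_lt _ _ hcvg _ v2_gt0 : \forall t \near \oo, _).
have := hd p psimp pq t.
have := ler_distD (iter t (@Fmap R n) p) (barycenter R n) q.
rewrite -/v; lra.
Qed.

End Simplex.
Unset Implicit Arguments.

Theorem corollary1 (R : realType) (n : nat) (hn : (2 <= n)%N) :
  (forall p0 : 'rV[R]_n, simplex p0 -> (forall i, 0 < p0 ord0 i) ->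
     (fun t : nat => iter t (@Fmap R n) p0) @ \oo --> @barycenter R n)
  /\ (forall p : 'rV[R]_n, bdry_simplex p -> bdry_simplex (Fmap p))
  /\ (forall q : 'rV[R]_n, bdry_simplex q -> Fmap q = q ->
        ~ lyapunov_stable_on (@simplex R n) (@Fmap R n) q).
Proof.
split; first exact: iter_Fmap_cvg_barycenter.
split; first exact: Fmap_bdry_simplex.
by move=> q hq _; exact: bdry_simplex_not_stable.
Qed.
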